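(* Let $r$ and $k$ be positive integers, and let $G$ be a graph with $\chi(G)\le r$. Let $P\subset V(G)$ and let $d\colon P\to[r+k]$ be a precoloring of $P$ in $G$. Let $H$ be the complete graph with $V(H)=[r+k]$, and let $\mathbf{E}^d=(E_0^d,E_1^d,E_2^d)$ be as defined in the context. (1) If $k\le r$ and $H$ has a good matching for $\mathbf{E}^d$ of order $\lfloor\frac12(r+k)\rfloor$, then $d$ can be extended to a $\lceil\frac{3r+k}{2}\rceil$-coloring of $G$. (2) If $k>r$ and $H$ has a good matching for $\mathbf{E}^d$ of order $r$, then $d$ can be extended to an $(r+k)$-coloring of $G$.
   Context: $\mathcal{D}_G(P,2)=\{\{x,y\}\subset P: x\ne y,\ d_G(x,y)\le 2\}$. $[m]=\{1,\dots,m\}$. A precoloring of $P$ in $G$ is a proper coloring of $G[P]$; an $m$-coloring is a proper coloring with at most $m$ colors; $d$ is extended by $f$ if $f(v)=d(v)$ for all $v\in P$. For each edge $e=ij$ of $H$, $\varphi(e)=|\{\{x,y\}\in\mathcal{D}_G(P,2):\{d(x),d(y)\}=\{i,j\}\}|$, and $E_0^d=\{e:\varphi(e)=0\}$, $E_1^d=\{e:\varphi(e)=1\}$, $E_2^d=\{e:\varphi(e)\ge2\}$, $\mathbf{E}^d=(E_0^d,E_1^d,E_2^d)$. For an ordered partition $\mathbf{E}=(E_0,E_1,E_2)$ of $E(H)$ (pairwise disjoint sets, possibly empty, with union $E(H)$), a matching $M$ of $H$ is a good matching for $\mathbf{E}$ if $M\cap E_2=\emptyset$ and $|M\cap E_1|\le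 1$. The order of a matching is its number of edges. *)

From mathcomp Require Import all_boot.
Set Implicit Arguments. Unset Strict Implicit. Unset Printing Implicit Defensive.

(* Finite simple graph: vertex type T : finType, adjacency e : rel T,
   assumed symmetric and irreflexive in the theorem. Colors are natural numbers. *)

Definition proper (T : finType) (e : rel T) (f : T -> nat) : Prop :=
  forall x y, e x y -> f x != f y.

Definition m_coloring (T : finType) (e : rel T) (m : nat) (f : T -> nat) : Prop :=
  proper e f /\ size (undup [seq f x | x <- enum T]) <= m.

Definition colorable (T : finType) (e : rel T) (m : nat) : Prop :=
  exists f : T -> nat, m_coloring e m f.

Definition dist_le2 (T : finType) (e : rel T) (x y : T) : bool :=
  e x y || [exists z, e x z && e z y].

Definition D2 (T : finType) (e : rel T) (P : {set T}) : {set {set T}} :=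
  [set S : {set T} | [exists x, exists y,
     [&& x \in P, y \in P, x != y, dist_le2 e x y & S == [set x; y]]]].

Definition precoloring (T : finType) (e : rel T) (P : {set T}) (n : nat)
  (d : T -> nat) : Prop :=
  (forall x, x \in P -> 1 <= d x <= n) /\
  (forall x y, x \in P -> y \in P -> e x y -> d x != d y).

Definition phi (T : finType) (e : rel T) (P : {set T}) (d : T -> nat)
  (i j : nat) : nat :=
  #|[set S in D2 e P | [exists x, exists y,
       [&& S == [set x; y], d x == i & d y == j]]]|.

(* A matching of the complete graph H on [n] = {1,...,n}: a list of edges (i,j)
   with 1 <= i < j <= n, pairwise vertex-disjoint.  Its order is its size. *)
Definition H_matching (n : nat) (M : seq (nat * nat)) : bool :=
  all (fun p => (1 <= p.1) && (p.1 < p.2 <= n)) M &&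
  pairwise (fun a b => [&& a.1 != b.1, a.1 != b.2, a.2 != b.1 & a.2 != b.2]) M.

(* good matching for E^d: no edge of E_2^d (phi >= 2), at most one edge of E_1^d *)
Definition good_matching (T : finType) (e : rel T) (P : {set T}) (d : T -> nat)
  (n : nat) (M : seq (nat * nat)) : Prop :=
  H_matching n M /\
  all (fun p => phi e P d p.1 p.2 <= 1) M /\
  count (fun p => phi e P d p.1 p.2 == 1) M <= 1.

Definition extends_to (T : finType) (e : rel T) (P : {set T}) (d : T -> nat)
  (m : nat) : Prop :=
  exists f : T -> nat, m_coloring e m f /\ (forall v, v \in P -> f v = d v).

From mathcomp Require Import all_boot zify.
Set Implicit Arguments. Unset Strict Implicit. Unset Printing Implicit Defensive.

(* Split V(G) into colour classes V_0, ..., V_{r-1} and let a_t b_t be the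
   t-th edge of the good matching M.  A vertex of V_t outside P, t < |M|,
   gets colour a_t unless it has a precoloured neighbour of colour a_t, in
   which case it gets b_t; the remaining r - |M| classes get fresh colours.
   This fails only at a vertex v with precoloured neighbours u, w coloured
   a_t and b_t: then {u, w} is in D_G(P,2), so a_t b_t is the edge of M in
   E_1, and {u, w} is the unique pair witnessing it.  Renaming the classes
   so that a vertex of that pair lies in V_t rules this out, because v is
   adjacent to it.
   Altogether r + k + (r - |M|) colours are used. *)

Section Colorings.
Variables (T : finType) (e : rel T).

Lemma m_coloring_range (m : nat) (f : T -> nat) :
  proper e f -> (forall v, 1 <= f v <= m) -> m_coloring e m f.
Proof.
move=> f_proper f_range; split => //.
rewrite -[m in _ <= m](size_iota 1); apply: uniq_leq_size; first exact: undup_uniq.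
move=> c; rewrite mem_undup => /mapP [x _ ->]; rewrite mem_iota.
by have := f_range x; lia.
Qed.

Lemma colorable_classes (r : nat) :
  colorable e r -> exists cls : T -> nat, proper e cls /\ forall v, cls v < r.
Proof.
case=> f [f_proper]; set s := undup _ => size_s.
have f_in_s v : f v \in s by rewrite mem_undup map_f ?mem_enum.
exists (fun v => index (f v) s); split => [u v huv|v]; last first.
  by apply: leq_trans size_s; rewrite index_mem.
apply: contra (f_proper _ _ huv) => /eqP eq_index.
by rewrite -(nth_index 0 (f_in_s u)) eq_index nth_index.
Qed.

Lemma proper_relabel (r : nat) (cls : T -> nat) (x : T) (p : nat) :
  proper e cls -> (forall v, cls v < r) -> p < r ->
  exists cls' : T -> nat, [/\ proper e cls', forall v, cls' v < r & cls' x = p].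
Proof.
move=> cls_proper cls_lt p_lt.
pose swap t := if t == cls x then p else if t == p then cls x else t.
have swapK : involutive swap.
  move=> t; rewrite /swap; case: (eqVneq t (cls x)) => [->|ne_x].
    by rewrite eqxx; case: eqVneq.
  case: (eqVneq t p) => [->|ne_p]; first by rewrite eqxx.
  by rewrite (negbTE ne_x) (negbTE ne_p).
exists (swap \o cls); split => /= [u v huv|v|]; last by rewrite /swap eqxx.
  by rewrite (inj_eq (can_inj swapK)); apply: cls_proper.
by rewrite /swap; case: ifP => //; case: ifP.
Qed.

End Colorings.

Lemma count_le1_nth_inj (A : Type) (a : pred A) (s : seq A) (x0 : A) (i j : nat) :
  count a s <= 1 -> i < size s -> j < size s ->
  a (nth x0 s i) -> a (nth x0 s j) -> i = j.
Proof.
wlog lt_ij : i j / i < j.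
  move=> W; case: (ltngtP i j) => [lt_ij|lt_ji|//]; first exact: W.
  by move=> count_s hi hj ai aj; apply/esym/W.
move=> count_s _ hj ai aj.
have take_a : has a (take j s).
  by apply/(has_nthP x0); exists i; rewrite ?nth_take ?size_take ?hj.
have drop_a : has a (drop j s).
  by apply/(has_nthP x0); exists 0; rewrite ?nth_drop ?addn0 ?size_drop ?subn_gt0.
move: count_s take_a drop_a; rewrite -{1}(cat_take_drop j s) count_cat !has_count.
lia.
Qed.

Definition colored_pairs (T : finType) (e : rel T) (P : {set T}) (d : T -> nat)
    (i j : nat) : {set {set T}} :=
  [set S in D2 e P | [exists x, exists y, [&& S == [set x; y], d x == i & d y == j]]].

Lemma common_neighbour_colored_pair (T : finType) (e : rel T) (P : {set T})
    (d : T -> nat) (a b : nat) (v u w : T) :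
  symmetric e -> a != b -> u \in P -> w \in P -> e v u -> e v w ->
  d u = a -> d w = b -> [set u; w] \in colored_pairs e P d a b.
Proof.
move=> e_sym ne_ab uP wP evu evw du dw.
have ne_uw : u != w by apply: contra_neq ne_ab => eq_uw; rewrite -du -dw eq_uw.
rewrite !inE; apply/andP; split; apply/existsP; exists u; apply/existsP; exists w.
  by rewrite uP wP ne_uw eqxx andbT /dist_le2; apply/orP; right;
    apply/existsP; exists v; rewrite e_sym evu.
by rewrite du dw !eqxx.
Qed.

Definition unblocked (T : finType) (e : rel T) (P : {set T}) (d : T -> nat)
    (M : seq (nat * nat)) (cls : T -> nat) : Prop :=
  forall v u w, v \notin P -> cls v < size M -> u \in P -> w \in P ->
    e v u -> e v w -> d u = (nth (0, 0) M (cls v)).1 ->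
    d w = (nth (0, 0) M (cls v)).2 -> False.

Section Extension.
Variables (T : finType) (e : rel T) (P : {set T}) (d : T -> nat) (n : nat).
Variables (M : seq (nat * nat)) (cls : T -> nat).
Hypotheses (e_sym : symmetric e) (d_pre : precoloring e P n d).
Hypotheses (M_matching : H_matching n M) (cls_proper : proper e cls).
Hypothesis (cls_unblocked : unblocked e P d M cls).

Local Notation a t := (nth (0, 0) M t).1.
Local Notation b t := (nth (0, 0) M t).2.

Definition palette (t : nat) : seq nat :=
  if t < size M then [:: a t; b t] else [:: n + (t - size M).+1].

Definition extension_color (v : T) : nat :=
  if v \in P then d v else
  let t := cls v in
  if t < size M then
    if [exists u in P, e v u && (d u == a t)] then b t else a t
  else n + (t - size M).+1.

Lemma matching_edge_range t : t < size M -> 1 <= a t /\ a t < b t <= n.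
Proof.
case/andP: M_matching => /allP M_range _ t_lt.
by have /andP[] := M_range _ (mem_nth (0, 0) t_lt).
Qed.

Lemma palette_range (r t x : nat) :
  t < r -> x \in palette t -> 1 <= x <= n + (r - size M).
Proof.
rewrite /palette; case: ifP => [t_lt|t_ge]; rewrite !inE; last by move=> t_lt_r /eqP->; lia.
have edge_range := matching_edge_range t_lt.
by move=> _ /orP[] /eqP->; lia.
Qed.

Lemma palette_inj (s t x : nat) : x \in palette s -> x \in palette t -> s = t.
Proof.
wlog lt_st : s t / s < t.
  move=> W; case: (ltngtP s t) => [lt_st|lt_ts|//]; first exact: W.
  by move=> xs xt; apply/esym/W.
case/andP: M_matching => _ /(pairwiseP (0, 0)) M_disjoint.
rewrite /palette; case: ifP => s_lt; case: ifP => t_lt; rewrite !inE; first 1 last.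
- by have edge_range := matching_edge_range s_lt; move=> /orP[] /eqP-> /eqP; lia.
- by lia.
- by move=> /eqP-> /eqP; lia.
have /and4P[] := M_disjoint s t s_lt t_lt lt_st.
by move=> /eqP ne1 /eqP ne2 /eqP ne3 /eqP ne4 /orP[] /eqP-> /orP[] /eqP.
Qed.

Lemma extension_color_palette v : v \notin P -> extension_color v \in palette (cls v).
Proof.
move/negbTE=> vNP; rewrite /extension_color /palette vNP.
case: (cls v < size M); last by rewrite inE.
by case: ifP; rewrite !inE eqxx ?orbT.
Qed.

Lemma extension_color_boundary v w :
  v \notin P -> w \in P -> e v w -> extension_color v != d w.
Proof.
move=> vNP wP evw; case: d_pre => d_range _.
rewrite /extension_color (negbTE vNP); case: ifP => t_lt; last first.
  by have := d_range w wP; lia.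
case: ifP => [/existsP [u /andP [uP /andP [evu /eqP du]]]|/negbT no_a].
  by apply/eqP => dw; apply: (cls_unblocked vNP t_lt uP wP evu evw).
by apply: contra no_a => /eqP dw; apply/existsP; exists w; rewrite wP evw dw eqxx.
Qed.

Lemma extension_color_proper : proper e extension_color.
Proof.
case: d_pre => _ d_proper v w evw.
case: (boolP (v \in P)) => vP; case: (boolP (w \in P)) => wP.
- by rewrite /extension_color vP wP; apply: d_proper.
- by rewrite eq_sym {2}/extension_color vP extension_color_boundary // e_sym.
- by rewrite {2}/extension_color wP extension_color_boundary.
apply: contra (cls_proper evw) => /eqP eq_color; apply/eqP.
apply: (palette_inj (extension_color_palette vP)).
by rewrite eq_color extension_color_palette.
Qed.

Lemma extends_to_unblocked r :
  (forall v, cls v < r) -> extends_to e P d (n + (r - size M)).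
Proof.
move=> cls_lt; exists extension_color; split; last first.
  by move=> v vP; rewrite /extension_color vP.
apply: m_coloring_range extension_color_proper _ => v.
case: (boolP (v \in P)) => vP.
  by case: d_pre => d_range _; rewrite /extension_color vP; have := d_range v vP; lia.
exact: palette_range (cls_lt v) (extension_color_palette vP).
Qed.

End Extension.

Section GoodMatching.
Variables (T : finType) (e : rel T) (P : {set T}) (d : T -> nat) (n : nat).
Variable (M : seq (nat * nat)).
Hypotheses (e_sym : symmetric e) (M_good : good_matching e P d n M).

Local Notation a t := (nth (0, 0) M t).1.
Local Notation b t := (nth (0, 0) M t).2.
Local Notation in_E1 t := (phi e P d (a t) (b t) == 1).

Lemma blocked_edge_in_E1 t v u w :
  t < size M -> u \in P -> w \in P -> e v u -> e v w ->
  d u = a t -> d w = b t -> in_E1 t.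
Proof.
move=> t_lt uP wP evu evw du dw.
case: M_good => [M_matching [/allP M_phi _]].
have [_ /andP [lt_ab _]] := matching_edge_range M_matching t_lt.
have uw_pair :=
  common_neighbour_colored_pair e_sym (negbT (ltn_eqF lt_ab)) uP wP evu evw du dw.
have phi_pos : 0 < phi e P d (a t) (b t) by apply/card_gt0P; exists [set u; w].
by have := M_phi _ (mem_nth (0, 0) t_lt); rewrite eqn_leq phi_pos andbT.
Qed.

Lemma E1_pair_endpoint p :
  in_E1 p -> exists x : T, forall u w,
    [set u; w] \in colored_pairs e P d (a p) (b p) -> x = u \/ x = w.
Proof.
move=> p_E1; have /card_gt0P [S S_pair] : 0 < phi e P d (a p) (b p) by rewrite (eqP p_E1).
have : S \in D2 e P by move: S_pair; rewrite inE => /andP[].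
rewrite inE => /existsP [x /existsP [y /and5P [_ _ _ _ /eqP S_xy]]].
exists x => u w uw_pair.
have /card_le1_eqP unique_pair : phi e P d (a p) (b p) <= 1 by rewrite (eqP p_E1).
have : x \in [set u; w] by rewrite (unique_pair _ _ S_pair uw_pair) S_xy !inE eqxx.
by rewrite !inE => /orP[] /eqP; [left | right].
Qed.

Lemma good_matching_unblocked r :
  colorable e r -> size M <= r ->
  exists cls : T -> nat, [/\ proper e cls, forall v, cls v < r & unblocked e P d M cls].
Proof.
move=> G_colorable size_M; have [cls0 [cls0_proper cls0_lt]] := colorable_classes G_colorable.
case: M_good => M_matching [_ count_E1].
have [E1_edge|no_E1] := boolP (has (fun q => phi e P d q.1 q.2 == 1) M); last first.
  exists cls0; split => // v u w _ t_lt uP wP evu evw du dw.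
  move/hasPn: no_E1 => /(_ _ (mem_nth (0, 0) t_lt)) /negP; apply.
  exact: blocked_edge_in_E1 t_lt uP wP evu evw du dw.
pose p := find (fun q : nat * nat => phi e P d q.1 q.2 == 1) M.
have p_lt : p < size M by rewrite -has_find.
have p_E1 : in_E1 p := nth_find (0, 0) E1_edge.
have [x x_endpoint] := E1_pair_endpoint p_E1.
have [cls [cls_proper cls_lt cls_x]] :=
  proper_relabel x cls0_proper cls0_lt (leq_trans p_lt size_M).
exists cls; split => // v u w vNP t_lt uP wP evu evw du dw.
have t_E1 := blocked_edge_in_E1 t_lt uP wP evu evw du dw.
have t_p : cls v = p := count_le1_nth_inj count_E1 t_lt p_lt t_E1 p_E1.
rewrite t_p in du dw.
have [_ /andP [lt_ab _]] := matching_edge_range M_matching p_lt.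
have uw_pair :=
  common_neighbour_colored_pair e_sym (negbT (ltn_eqF lt_ab)) uP wP evu evw du dw.
case: (x_endpoint _ _ uw_pair) => x_eq;
  [move: (cls_proper _ _ evu) | move: (cls_proper _ _ evw)];
  by rewrite -x_eq t_p cls_x eqxx.
Qed.

End GoodMatching.

Theorem lemma10 (r k : nat) (T : finType) (e : rel T)
  (e_sym : symmetric e) (e_irr : irreflexive e)
  (hr : 0 < r) (hk : 0 < k)
  (hchi : colorable e r)
  (P : {set T}) (d : T -> nat) (hd : precoloring e P (r + k) d) :
  ((k <= r) ->
     (exists M, good_matching e P d (r + k) M /\ size M = (r + k)./2) ->
     extends_to e P d ((3 * r + k).+1./2)) /\
  ((r < k) ->
     (exists M, good_matching e P d (r + k) M /\ size M = r) ->
     extends_to e P d (r + k)).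
Proof.
have extend M : good_matching e P d (r + k) M -> size M <= r ->
    extends_to e P d (r + k + (r - size M)).
  move=> M_good M_le.
  have [cls [cls_proper cls_lt cls_unblocked]] :=
    good_matching_unblocked e_sym M_good hchi M_le.
  exact: (extends_to_unblocked e_sym hd M_good.1 cls_proper cls_unblocked cls_lt).
split => [k_le [M [M_good size_M]] | r_lt [M [M_good size_M]]].
- have M_le : size M <= r by rewrite size_M -divn2; lia.
  have -> : (3 * r + k).+1./2 = r + k + (r - size M) by rewrite size_M -!divn2; lia.
  exact: extend.
- by have := extend M M_good; rewrite size_M subnn addn0; apply.
Qed.
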